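(* Let $(E_-,E_0,E_+)$ be an object of $\mathcal{A}_2$. Then $E_0=\delta_-(E_-)\oplus\ker\gamma_-=\delta_+(E_+)\oplus\ker\gamma_+=\delta_+(E_+)\oplus\ker\gamma_-=\delta_-(E_-)\oplus\ker\gamma_+$ (internal direct sums), so $(E_0,\delta_-(E_-),\delta_+(E_+),\ker\gamma_-,\ker\gamma_+)$ is an object of $\mathcal{C}$. Moreover, if $(e_-,e_0,e_+)$ is a morphism in $\mathcal{A}_2$ from $(E_-,E_0,E_+)$ to $(F_-,F_0,F_+)$ (with structure maps $\eta_\pm,\xi_\pm$), then $e_0(\delta_\pm(E_\pm))\subseteq\eta_\pm(F_\pm)$ and $e_0(\ker\gamma_\pm)\subseteq\ker\xi_\pm$, so $e_0$ is a morphism in $\mathcal{C}$. Consequently $T:\mathcal{A}_2\to\mathcal{C}$, $T(E)=(E_0,\delta_-(E_-),\delta_+(E_+),\ker\gamma_-,\ker\gamma_+)$, $T(e_-,e_0,e_+)=e_0$, is a well-defined functor.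
   Context: Fix a field $\mathbf{k}$. Category $\mathcal{A}_2$: objects are $(E_-,E_0,E_+)$ with vector spaces $E_-,E_0,E_+$ and linear maps $\delta_-:E_-\to E_0$, $\gamma_-:E_0\to E_-$, $\delta_+:E_+\to E_0$, $\gamma_+:E_0\to E_+$ such that $\gamma_+\delta_+=1_{E_+}$, $\gamma_-\delta_-=1_{E_-}$, and $\gamma_-\delta_+:E_+\to E_-$, $\gamma_+\delta_-:E_-\to E_+$ are isomorphisms. A morphism to $(F_-,F_0,F_+)$ (maps $\eta_\pm:F_\pm\to F_0$, $\xi_\pm:F_0\to F_\pm$) is a triple of linear maps $(e_-,e_0,e_+)$ with $e_0\delta_\pm=\eta_\pm e_\pm$ and $\xi_\pm e_0=e_\pm\gamma_\pm$. Category $\mathcal{C}$: objects are tuples $(V,A_1,A_2,B_1,B_2)$ with $V$ a vector space and subspaces $A_1,A_2,B_1,B_2\subseteq V$ such that $V=A_i\oplus B_j$ (internal direct sum) for all $i,j\in\{1,2\}$; morphisms $(V,A,B)\to(W,X,Y)$ are linear maps $\varphi$ with $\varphi(A_i)\subseteq X_i$, $\varphi(B_i)\subseteq Y_i$. *)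

From HB Require Import structures.
From mathcomp Require Import all_boot all_order all_algebra.
Set Implicit Arguments. Unset Strict Implicit. Unset Printing Implicit Defensive.
Import GRing.Theory.
Local Open Scope ring_scope.

(* Subsets of a vector space are Prop-valued predicates (possibly infinite
   dimensional spaces: images/kernels need not be decidable). *)
Section Defs.
Variable K : fieldType.

Definition is_subspace (V : lmodType K) (S : V -> Prop) : Prop :=
  S 0 /\ forall (a : K) (u v : V), S u -> S v -> S (a *: u + v).

Definition internal_dsum (V : lmodType K) (A B : V -> Prop) : Prop :=
  (forall v : V, exists a b, A a /\ B b /\ v = a + b) /\
  (forall v : V, A v -> B v -> v = 0).

Definition img (U V : lmodType K) (f : {linear U -> V}) : V -> Prop :=
  fun y => exists x, f x = y.

Definition ker (U V : lmodType K) (f : {linear U -> V}) : U -> Prop :=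
  fun x => f x = 0.

Definition isA2obj (Em E0 Ep : lmodType K)
  (dm : {linear Em -> E0}) (gm : {linear E0 -> Em})
  (dp : {linear Ep -> E0}) (gp : {linear E0 -> Ep}) : Prop :=
  [/\ (forall x, gp (dp x) = x), (forall x, gm (dm x) = x),
      bijective (gm \o dp) & bijective (gp \o dm)].

Definition isA2mor (Em E0 Ep Fm F0 Fp : lmodType K)
  (dm : {linear Em -> E0}) (gm : {linear E0 -> Em})
  (dp : {linear Ep -> E0}) (gp : {linear E0 -> Ep})
  (etam : {linear Fm -> F0}) (xim : {linear F0 -> Fm})
  (etap : {linear Fp -> F0}) (xip : {linear F0 -> Fp})
  (em : {linear Em -> Fm}) (e0 : {linear E0 -> F0}) (ep : {linear Ep -> Fp})
  : Prop :=
  [/\ (forall x, e0 (dm x) = etam (em x)), (forall x, e0 (dp x) = etap (ep x)),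
      (forall y, xim (e0 y) = em (gm y)) & (forall y, xip (e0 y) = ep (gp y))].

Definition isCobj (V : lmodType K) (A1 A2 B1 B2 : V -> Prop) : Prop :=
  [/\ is_subspace A1, is_subspace A2, is_subspace B1, is_subspace B2 &
      [/\ internal_dsum A1 B1, internal_dsum A1 B2,
          internal_dsum A2 B1 & internal_dsum A2 B2]].

Definition isCmor (V W : lmodType K) (phi : {linear V -> W})
  (A1 A2 B1 B2 : V -> Prop) (X1 X2 Y1 Y2 : W -> Prop) : Prop :=
  [/\ (forall v, A1 v -> X1 (phi v)), (forall v, A2 v -> X2 (phi v)),
      (forall v, B1 v -> Y1 (phi v)) & (forall v, B2 v -> Y2 (phi v))].

End Defs.

From mathcomp Require Import all_boot all_order all_algebra.
Set Implicit Arguments. Unset Strict Implicit. Unset Printing Implicit Defensive.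
Local Open Scope ring_scope.
Import GRing.Theory.

(* Each decomposition comes from one composite [g \o d] being invertible:
   [v = d (h (g v)) + (v - d (h (g v)))] with [h] the inverse splits off the
   image of [d] from the kernel of [g].  The four composites [gamma_- delta_-],
   [gamma_+ delta_+], [gamma_- delta_+], [gamma_+ delta_-] are invertible by the
   axioms of [A_2]. *)

Section ImageKernel.
Variables (K : fieldType) (U V W : lmodType K).

Lemma img_subspace (f : {linear U -> V}) : is_subspace (img f).
Proof.
split; first by exists 0; rewrite linear0.
by move=> a _ _ [x <-] [y <-]; exists (a *: x + y); rewrite linearD linearZ.
Qed.

Lemma ker_subspace (f : {linear U -> V}) : is_subspace (ker f).
Proof.
split; first by rewrite /ker linear0.
by move=> a u v fu0 fv0; rewrite /ker linearD linearZ /= fu0 fv0 scaler0 addr0.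
Qed.

Lemma internal_dsum_img_ker (d : {linear U -> V}) (g : {linear V -> W}) :
  bijective (g \o d) -> internal_dsum (img d) (ker g).
Proof.
case=> h hK Kh; split=> [v | _ [x <-] gdx0].
  exists (d (h (g v))), (v - d (h (g v))); split; first by exists (h (g v)).
  split; last by rewrite addrC subrK.
  by rewrite /ker linearB; have /= -> := Kh (g v); rewrite subrr.
have h0 : h 0 = 0 by rewrite -(linear0 (g \o d)) hK.
by rewrite -(hK x) /= gdx0 h0 linear0.
Qed.

Lemma cancel_comp_bijective (d : {linear U -> V}) (g : {linear V -> U}) :
  cancel d g -> bijective (g \o d).
Proof. by move=> dK; exists id => x /=; rewrite dK. Qed.

End ImageKernel.

Section Intertwining.
Variables (K : fieldType) (U V U' V' : lmodType K).
Variables (f : {linear U -> U'}) (e : {linear V -> V'}).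

Lemma img_intertwine (d : {linear U -> V}) (d' : {linear U' -> V'}) :
  (forall x, e (d x) = d' (f x)) -> forall v, img d v -> img d' (e v).
Proof. by move=> ed v [x <-]; exists (f x); rewrite ed. Qed.

Lemma ker_intertwine (g : {linear V -> U}) (g' : {linear V' -> U'}) :
  (forall y, g' (e y) = f (g y)) -> forall v, ker g v -> ker g' (e v).
Proof. by move=> ge v gv0; rewrite /ker ge gv0 linear0. Qed.

End Intertwining.

Theorem mainTheorem4 (K : fieldType) (Em E0 Ep Fm F0 Fp : lmodType K)
  (dm : {linear Em -> E0}) (gm : {linear E0 -> Em})
  (dp : {linear Ep -> E0}) (gp : {linear E0 -> Ep})
  (etam : {linear Fm -> F0}) (xim : {linear F0 -> Fm})
  (etap : {linear Fp -> F0}) (xip : {linear F0 -> Fp}) :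
  isA2obj dm gm dp gp ->
  (* object part: the four internal direct sum decompositions, hence T(E) in C *)
  [/\ internal_dsum (img dm) (ker gm), internal_dsum (img dp) (ker gp),
      internal_dsum (img dp) (ker gm), internal_dsum (img dm) (ker gp) &
      isCobj (img dm) (img dp) (ker gm) (ker gp)] /\
  (* morphism part *)
  (isA2obj etam xim etap xip ->
   forall (em : {linear Em -> Fm}) (e0 : {linear E0 -> F0})
          (ep : {linear Ep -> Fp}),
   isA2mor dm gm dp gp etam xim etap xip em e0 ep ->
   [/\ (forall v, img dm v -> img etam (e0 v)),
       (forall v, img dp v -> img etap (e0 v)),
       (forall v, ker gm v -> ker xim (e0 v)),
       (forall v, ker gp v -> ker xip (e0 v)) &
       isCmor e0 (img dm) (img dp) (ker gm) (ker gp)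
                 (img etam) (img etap) (ker xim) (ker xip)]).
Proof.
case=> dpK dmK gm_dp gp_dm.
have Dm := internal_dsum_img_ker (cancel_comp_bijective dmK).
have Dp := internal_dsum_img_ker (cancel_comp_bijective dpK).
have Dmp := internal_dsum_img_ker gm_dp.
have Dpm := internal_dsum_img_ker gp_dm.
split.
  split=> //; split; by [exact: img_subspace | exact: ker_subspace | split].
move=> _ em e0 ep [e0dm e0dp xime0 xipe0].
have Im := img_intertwine e0dm; have Ip := img_intertwine e0dp.
have Km := ker_intertwine xime0; have Kp := ker_intertwine xipe0.
by split.
Qed.
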